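(* If a sequent $\Gamma\Rightarrow\Delta$ is provable in $\mathsf{Grz}_\infty$, then $\Gamma\Rightarrow\Delta$ has a slim $\infty$-proof in $\mathsf{Grz}_\infty$.
   Context: Formulas are built from $\bot$ and atomic propositions using $\to$ and $\Box$. A sequent is $\Gamma\Rightarrow\Delta$ with $\Gamma,\Delta$ finite multisets of formulas; $\Box\Pi$ denotes the multiset $\{\Box B:B\in\Pi\}$. The calculus $\mathsf{Grz}_\infty$ has initial sequents $\Gamma,p\Rightarrow p,\Delta$ ($p$ atomic) and $\Gamma,\bot\Rightarrow\Delta$, and rules: $(\to_L)$ from $\Gamma,B\Rightarrow\Delta$ and $\Gamma\Rightarrow A,\Delta$ infer $\Gamma,A\to B\Rightarrow\Delta$; $(\to_R)$ from $\Gamma,A\Rightarrow B,\Delta$ infer $\Gamma\Rightarrow A\to B,\Delta$; $(\mathsf{refl})$ from $\Gamma,B,\Box B\Rightarrow\Delta$ infer $\Gamma,\Box B\Rightarrow\Delta$; $(\Box)$ from left premise $\Gamma,\Box\Pi\Rightarrow A,\Delta$ and right premise $\Box\Pi\Rightarrow A$ infer $\Gamma,\Box\Pi\Rightarrow\Box A,\Delta$. An $\infty$-proof is a possibly infinite tree of sequents built by these rules, with leaves labelled by initial sequents, in which every infinite branch passes through a right premise of $(\Box)$ infinitely often; a sequent is provable if it labels the root of an $\infty$-proof. An application of $(\Box)$ is slim if the multiset $\Pi$ in it is a set (contains no formula more than once); an $\infty$-proof is slim if every application of $(\Box)$ in it is slim. *)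

From HB Require Import structures.
From mathcomp Require Import all_boot.
Set Implicit Arguments. Unset Strict Implicit. Unset Printing Implicit Defensive.

Inductive form : Type :=
| Bot : form
| Var : nat -> form
| Imp : form -> form -> form
| Box : form -> form.

Definition form_eq_dec (x y : form) : {x = y} + {x <> y}.
Proof. decide equality; exact: (decP eqP). Defined.

HB.instance Definition _ := comparableMixin form_eq_dec.

(* A sequent Gamma => Delta; the finite multisets are represented by lists,
   and all rule conditions are stated up to permutation (perm_eq). *)
Definition sequent := (seq form * seq form)%type.

Inductive rule : Type :=
| RAxAt  : nat -> rule                 (* Gamma, p => p, Delta *)
| RAxBot : rule                        (* Gamma, bot => Delta *)
| RImpL  : form -> form -> rule
| RImpR  : form -> form -> rule
| RRefl  : form -> rule                (* principal Box B on the left *)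
| RBox   : seq form -> form -> rule.   (* multiset Pi and principal Box A *)

Definition arity (r : rule) : nat :=
  match r with
  | RAxAt _ | RAxBot => 0
  | RImpL _ _ => 2
  | RImpR _ _ => 1
  | RRefl _ => 1
  | RBox _ _ => 2   (* premise 0 = left premise, premise 1 = right premise *)
  end.

Definition local_ok (s : sequent) (r : rule) (ch : nat -> sequent) : Prop :=
  match r with
  | RAxAt p => Var p \in s.1 /\ Var p \in s.2
  | RAxBot => Bot \in s.1
  | RImpL A B => exists G, perm_eq s.1 (Imp A B :: G) /\
        perm_eq (ch 0).1 (B :: G) /\ perm_eq (ch 0).2 s.2 /\
        perm_eq (ch 1).1 G /\ perm_eq (ch 1).2 (A :: s.2)
  | RImpR A B => exists D, perm_eq s.2 (Imp A B :: D) /\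
        perm_eq (ch 0).1 (A :: s.1) /\ perm_eq (ch 0).2 (B :: D)
  | RRefl B => Box B \in s.1 /\
        perm_eq (ch 0).1 (B :: s.1) /\ perm_eq (ch 0).2 s.2
  | RBox Pi A => exists G D, perm_eq s.1 (G ++ map Box Pi) /\
        perm_eq s.2 (Box A :: D) /\
        perm_eq (ch 0).1 s.1 /\ perm_eq (ch 0).2 (A :: D) /\
        perm_eq (ch 1).1 (map Box Pi) /\ perm_eq (ch 1).2 [:: A]
  end.

(* A (possibly infinite) tree of sequents: nodes are addressed by positions
   w : seq nat (path from the root), each labelled by a sequent and a rule;
   the children of w are rcons w i for i < arity (label w). *)
Record ptree := PTree { seqt : seq nat -> sequent; rl : seq nat -> rule }.

Fixpoint indom_aux (P : ptree) (pre w : seq nat) : bool :=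
  match w with
  | [::] => true
  | i :: w' => (i < arity (rl P pre)) && indom_aux P (rcons pre i) w'
  end.

Definition indom (P : ptree) (w : seq nat) : bool := indom_aux P [::] w.

Definition is_box (r : rule) : bool := if r is RBox _ _ then true else false.

Definition bpos (f : nat -> nat) (n : nat) : seq nat := mkseq f n.

Definition inf_branch (P : ptree) (f : nat -> nat) : Prop :=
  forall n, f n < arity (rl P (bpos f n)).

(* the branch passes through a right premise of (Box) infinitely often *)
Definition good_branch (P : ptree) (f : nat -> nat) : Prop :=
  forall n, exists m, n <= m /\ is_box (rl P (bpos f m)) /\ f m = 1.

Definition inf_proof (P : ptree) : Prop :=
  (forall w, indom P w -> local_ok (seqt P w) (rl P w) (fun i => seqt P (rcons w i)))
  /\ (forall f, inf_branch P f -> good_branch P f).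

Definition provable (G D : seq form) : Prop :=
  exists P, inf_proof P /\ seqt P [::] = (G, D).

Definition slim (P : ptree) : Prop :=
  forall w, indom P w -> forall Pi A, rl P w = RBox Pi A -> uniq Pi.

From mathcomp Require Import all_boot.
From Stdlib Require Import ClassicalEpsilon FunctionalExtensionality.
Set Implicit Arguments. Unset Strict Implicit.

(* The slim proof replays the given infinite proof P on sequents that may hold
   fewer copies of formulas.  A node of the new tree carries a sequent t and a
   node v of P whose sequent is covered by t: each of its antecedent (succedent)
   formulas occurs in the antecedent (succedent) of t, or is an implication (or,
   in the succedent, a box) whose relevant immediate subformulas are covered.
   If the principal formula of the rule at v is absent from t, that rule is
   skipped by moving to a premise that is still covered; this is never the right
   premise of (Box), so by the branch condition of P only finitely many rules are
   skipped in a row.  Otherwise the rule is applied to t itself, with Pi replaced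
   by undup Pi in (Box), since Box (undup Pi) => A still covers Box Pi => A.
   Each branch of the new tree lifts to a branch of P whose right (Box) premises
   all come from rules applied in the new tree, so the branch condition
   transfers. *)

Lemma indom_aux_rcons P pre w i :
  indom_aux P pre (rcons w i) = indom_aux P pre w && (i < arity (rl P (pre ++ w))).
Proof.
elim: w pre => [|j w IH] pre /=; first by rewrite cats0 andbT.
by rewrite IH cat_rcons andbA.
Qed.

Lemma indom_rcons P w i : indom P (rcons w i) = indom P w && (i < arity (rl P w)).
Proof. exact: indom_aux_rcons. Qed.

Lemma indom_nth P u m : indom P u -> m < size u -> nth 0 u m < arity (rl P (take m u)).
Proof.
elim/last_ind: u m => [|v i IH] m //.
rewrite indom_rcons size_rcons ltnS => /andP[Hv Hi] Hm.
rewrite nth_rcons -cats1 takel_cat //.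
case: (ltngtP m (size v)) Hm => // [Hlt _|-> _]; first exact: IH.
by rewrite take_size.
Qed.

Lemma prefix_take_nth (T : eqType) (x0 : T) (u w : seq T) m :
  prefix u w -> m < size u -> take m w = take m u /\ nth x0 w m = nth x0 u m.
Proof. by case/prefixP=> s -> Hm; rewrite takel_cat ?nth_cat ?Hm // ltnW. Qed.

Lemma perm_cat_uniq_subset (T : eqType) (u t : seq T) :
  uniq u -> {subset u <= t} -> exists G, perm_eq t (G ++ u).
Proof.
move=> u_uniq u_sub; set u' := [seq x <- undup t | x \in u].
have [G HG] := perm_to_subseq (subseq_trans (filter_subseq _ _) (undup_subseq t) : subseq u' t).
exists G; apply: perm_trans HG _.
rewrite perm_catC perm_cat2l uniq_perm ?filter_uniq ?undup_uniq // => x.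
by rewrite mem_filter mem_undup andb_idr //; apply: u_sub.
Qed.

Lemma incr_segment (a : nat -> nat) : (forall k, a k < a k.+1) ->
  forall n m, a n <= m -> exists2 k, n <= k & a k <= m < a k.+1.
Proof.
move=> a_incr n m Hnm.
have le_a k : k <= a k by elim: k => // k IH; exact: leq_ltn_trans IH (a_incr k).
have exP : exists k, a k <= m by exists n.
have boundP k : a k <= m -> k <= m by move/(leq_trans (le_a k)).
case: (ex_maxnP exP boundP) => k Hk Hmax; exists k; first exact: Hmax.
by rewrite Hk ltnNge; apply/negP => /Hmax; rewrite ltnn.
Qed.

Section LimitBranch.
Variable V : nat -> seq nat.
Hypothesis V_prefix : forall n, prefix (V n) (V n.+1).
Hypothesis V_size : forall n, n < size (V n.+1).

Definition limit_branch m := nth 0 (V m.+1) m.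

Lemma limit_branch_agree m N : m < size (V N) ->
  bpos limit_branch m = take m (V N) /\ limit_branch m = nth 0 (V N) m.
Proof.
have V_mono := homo_leq (@prefix_refl _) (@prefix_trans _) V_prefix.
have agree j : j < size (V N) -> limit_branch j = nth 0 (V N) j.
  move=> Hj; rewrite /limit_branch.
  case: (leqP j.+1 N) => HjN.
    by rewrite (proj2 (prefix_take_nth 0 (V_mono _ _ HjN) (V_size j))).
  by rewrite (proj2 (prefix_take_nth 0 (V_mono _ _ (ltnW HjN)) Hj)).
move=> Hm; split; last exact: agree.
apply: (@eq_from_nth _ 0); first by rewrite size_mkseq size_take Hm.
move=> j; rewrite size_mkseq => Hj.
by rewrite nth_mkseq // nth_take // agree // (ltn_trans Hj Hm).
Qed.

Lemma limit_branch_good P : inf_proof P -> (forall n, indom P (V n)) ->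
  forall n, exists2 m, n <= m & forall N, m < size (V N) ->
    is_box (rl P (take m (V N))) /\ nth 0 (V N) m = 1.
Proof.
move=> [_ P_good] V_dom n.
have branch : inf_branch P limit_branch.
  move=> m; have [-> ->] := limit_branch_agree (V_size m).
  exact: indom_nth (V_dom _) (V_size m).
have [m [Hnm [Hbox H1]]] := P_good _ branch n.
by exists m => // N /limit_branch_agree [Eb Eg]; rewrite -Eb -Eg.
Qed.

End LimitBranch.

Fixpoint lcov (t : sequent) (F : form) {struct F} : bool :=
  (F \in t.1) || match F with Imp A B => rcov t A || lcov t B | _ => false end
with rcov (t : sequent) (F : form) {struct F} : bool :=
  (F \in t.2) ||
  match F with Imp A B => lcov t A && rcov t B | Box A => rcov t A | _ => false end.

Definition covers (t s : sequent) : bool := all (lcov t) s.1 && all (rcov t) s.2.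

Lemma lcov_mem t F : F \in t.1 -> lcov t F.
Proof. by case: F => [|p|A B|A] /= ->. Qed.

Lemma rcov_mem t F : F \in t.2 -> rcov t F.
Proof. by case: F => [|p|A B|A] /= ->. Qed.

Lemma covers_subset t t' : {subset t.1 <= t'.1} -> {subset t.2 <= t'.2} -> covers t' t.
Proof.
move=> H1 H2; apply/andP; split; apply/allP => F HF.
- by apply: lcov_mem; apply: H1.
- by apply: rcov_mem; apply: H2.
Qed.

Lemma covers_refl t : covers t t.
Proof. exact: covers_subset. Qed.

Lemma covers_perm t s L1 L2 :
  perm_eq s.1 L1 -> perm_eq s.2 L2 -> covers t s = covers t (L1, L2).
Proof. by move=> P1 P2; rewrite /covers (perm_all _ P1) (perm_all _ P2). Qed.

Lemma covers_consl t F L1 L2 : covers t (F :: L1, L2) = lcov t F && covers t (L1, L2).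
Proof. by rewrite /covers andbA. Qed.

Lemma covers_consr t F L1 L2 : covers t (L1, F :: L2) = rcov t F && covers t (L1, L2).
Proof. by rewrite /covers /= andbCA. Qed.

Lemma covers_mono t t' : covers t' t ->
  forall F, (lcov t F -> lcov t' F) /\ (rcov t F -> rcov t' F).
Proof.
case/andP=> /allP H1 /allP H2.
have {}H1 F : F \in t.1 -> lcov t' F by exact: H1.
have {}H2 F : F \in t.2 -> rcov t' F by exact: H2.
elim=> [|p|A [IHAl IHAr] B [IHBl IHBr]|A [_ IHr]] /=.
- by split=> /orP[H|//]; [exact: (H1 _ H)|exact: (H2 _ H)].
- by split=> /orP[H|//]; [exact: (H1 _ H)|exact: (H2 _ H)].
- split; case/orP=> [H|H].
  + exact: (H1 _ H).
  + by case/orP: H => [/IHAr|/IHBl] ->; rewrite !orbT.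
  + exact: (H2 _ H).
  + by case/andP: H => /IHAl -> /IHBr ->; rewrite orbT.
- split; first by case/orP=> // H; exact: (H1 _ H).
  by case/orP=> [H|/IHr ->]; [exact: (H2 _ H)|rewrite orbT].
Qed.

Lemma covers_trans t t' s : covers t' t -> covers t s -> covers t' s.
Proof.
move=> /covers_mono Ht /andP[/allP H1 /allP H2]; apply/andP; split; apply/allP => F HF.
- by apply: (proj1 (Ht F)); apply: H1.
- by apply: (proj2 (Ht F)); apply: H2.
Qed.

Lemma covers_decompose_l t t' X : X \in t.1 -> lcov t' X ->
  {subset rem X t.1 <= t'.1} -> {subset t.2 <= t'.2} -> covers t' t.
Proof.
move=> HX HX' H1 H2; rewrite (covers_perm _ (perm_to_rem HX) (perm_refl _)).
have /andP[H1' H2'] := covers_subset (t := (rem X t.1, t.2)) H1 H2.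
by rewrite /covers /= HX' H1'.
Qed.

Lemma covers_decompose_r t t' X : X \in t.2 -> rcov t' X ->
  {subset t.1 <= t'.1} -> {subset rem X t.2 <= t'.2} -> covers t' t.
Proof.
move=> HX HX' H1 H2; rewrite (covers_perm _ (perm_refl _) (perm_to_rem HX)).
have /andP[H1' H2'] := covers_subset (t := (t.1, rem X t.2)) H1 H2.
by rewrite /covers /= HX' H1' H2'.
Qed.

Definition skip_premise (r : rule) (t : sequent) : option nat :=
  match r with
  | RImpL A B => if Imp A B \in t.1 then None else Some (if lcov t B then 0 else 1)
  | RImpR A B => if Imp A B \in t.2 then None else Some 0
  | RBox _ A => if Box A \in t.2 then None else Some 0
  | _ => None
  end.

Definition emit_premise (r : rule) (t : sequent) (i : nat) : sequent :=
  match r with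
  | RImpL A B =>
      if i == 0 then (B :: rem (Imp A B) t.1, t.2) else (rem (Imp A B) t.1, A :: t.2)
  | RImpR A B => (A :: t.1, B :: rem (Imp A B) t.2)
  | RRefl B => (B :: t.1, t.2)
  | RBox Pi A => if i == 0 then (t.1, A :: rem (Box A) t.2) else (map Box (undup Pi), [:: A])
  | _ => t
  end.

Definition slim_rule (r : rule) : rule :=
  if r is RBox Pi A then RBox (undup Pi) A else r.

Lemma arity_slim_rule r : arity (slim_rule r) = arity r.
Proof. by case: r. Qed.

Lemma is_box_slim_rule r : is_box (slim_rule r) = is_box r.
Proof. by case: r. Qed.

Lemma skip_premise_arity r t i : skip_premise r t = Some i -> i < arity r.
Proof.
case: r => //= [A B|A B|Pi A]; case: ifP => // _ [<-] //.
by case: ifP.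
Qed.

Lemma skip_premise_box_right r t : skip_premise r t = Some 1 -> ~~ is_box r.
Proof. by case: r => // Pi A /=; case: ifP. Qed.

Section Replay.
Variables (s t : sequent) (ch : nat -> sequent).
Hypothesis t_covers : covers t s.

Lemma covers_skip_premise r i : local_ok s r ch -> skip_premise r t = Some i ->
  covers t (ch i).
Proof.
case: r => //= [A B|A B|Pi A] Hok; move: Hok t_covers.
- case=> G [P1 [P01 [P02 [P11 P12]]]].
  rewrite (covers_perm _ P1 (perm_refl _)) covers_consl => /andP[HX HG].
  case: ifP => // HN [<-]; case: ifP => HB.
    by rewrite (covers_perm _ P01 P02) covers_consl HB.
  move: HX; rewrite /= HN HB orbF /= => HA.
  by rewrite (covers_perm _ P11 P12) covers_consr HA.
- case=> D [P1 [P01 P02]].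
  rewrite (covers_perm _ (perm_refl _) P1) covers_consr => /andP[HX HD].
  case: ifP => // HN [<-]; move: HX; rewrite /= HN => /andP[HA HB].
  by rewrite (covers_perm _ P01 P02) covers_consl covers_consr HA HB.
- case=> G [D [P1 [P2 [P01 [P02 _]]]]].
  rewrite (covers_perm _ (perm_refl _) P2) covers_consr => /andP[HX HD].
  case: ifP => // HN [<-]; move: HX; rewrite /= HN /= => HA.
  by rewrite (covers_perm _ P01 P02) covers_consr HA.
Qed.

Lemma covers_emit_ImpL A B i : local_ok s (RImpL A B) ch -> Imp A B \in t.1 -> i < 2 ->
  covers (emit_premise (RImpL A B) t i) (ch i).
Proof.
case=> G [P1 [P01 [P02 [P11 P12]]]] HN; case: i => [|[|i]] //= _.
- set t0 := (B :: rem (Imp A B) t.1, t.2).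
  have HB : lcov t0 B := @lcov_mem t0 B (mem_head _ _).
  have Ht0 : covers t0 t.
    apply: (covers_decompose_l HN) => //; last exact: (@mem_behead _ t0.1).
    by rewrite /= HB !orbT.
  move: (covers_trans Ht0 t_covers).
  rewrite (covers_perm _ P1 (perm_refl _)) covers_consl => /andP[_ HG].
  by rewrite (covers_perm _ P01 P02) covers_consl HB.
- set t1 := (rem (Imp A B) t.1, A :: t.2).
  have HA : rcov t1 A := @rcov_mem t1 A (mem_head _ _).
  have Ht1 : covers t1 t.
    apply: (covers_decompose_l HN) => //; last exact: (@mem_behead _ t1.2).
    by rewrite /= HA !orbT.
  move: (covers_trans Ht1 t_covers).
  rewrite (covers_perm _ P1 (perm_refl _)) covers_consl => /andP[_ HG].
  by rewrite (covers_perm _ P11 P12) covers_consr HA.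
Qed.

Lemma covers_emit_ImpR A B : local_ok s (RImpR A B) ch -> Imp A B \in t.2 ->
  covers (emit_premise (RImpR A B) t 0) (ch 0).
Proof.
case=> D [P1 [P01 P02]] HN /=.
set t0 := (A :: t.1, B :: rem (Imp A B) t.2).
have HA : lcov t0 A := @lcov_mem t0 A (mem_head _ _).
have HB : rcov t0 B := @rcov_mem t0 B (mem_head _ _).
have Ht0 : covers t0 t.
  apply: (covers_decompose_r HN).
  - by rewrite /= HA HB orbT.
  - exact: (@mem_behead _ t0.1).
  - exact: (@mem_behead _ t0.2).
move: (covers_trans Ht0 t_covers).
rewrite (covers_perm _ (perm_refl _) P1) covers_consr => /andP[_ HG].
by rewrite (covers_perm _ P01 P02) covers_consl covers_consr HA HB.
Qed.

Lemma covers_emit_Refl B : local_ok s (RRefl B) ch ->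
  covers (emit_premise (RRefl B) t 0) (ch 0).
Proof.
case=> _ [P01 P02] /=; set t0 := (B :: t.1, t.2).
have HB : lcov t0 B := @lcov_mem t0 B (mem_head _ _).
have Ht0 : covers t0 t by apply: covers_subset => //; exact: (@mem_behead _ t0.1).
by rewrite (covers_perm _ P01 P02) covers_consl HB -surjective_pairing (covers_trans Ht0 t_covers).
Qed.

Lemma covers_emit_Box Pi A i : local_ok s (RBox Pi A) ch -> Box A \in t.2 -> i < 2 ->
  covers (emit_premise (RBox Pi A) t i) (ch i).
Proof.
case=> G [D [P1 [P2 [P01 [P02 [P11 P12]]]]]] HN; case: i => [|[|i]] //= _.
- set t0 := (t.1, A :: rem (Box A) t.2).
  have HA : rcov t0 A := @rcov_mem t0 A (mem_head _ _).
  have Ht0 : covers t0 t.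
    apply: (covers_decompose_r HN) => //; last exact: (@mem_behead _ t0.2).
    by rewrite /= HA orbT.
  move: (covers_trans Ht0 t_covers).
  rewrite (covers_perm _ (perm_refl _) P2) covers_consr => /andP[_ HG].
  by rewrite (covers_perm _ P01 P02) covers_consr HA.
- rewrite (covers_perm _ P11 P12); apply: covers_subset => //= F.
  by case/mapP=> C HC ->; rewrite map_f ?mem_undup.
Qed.

Lemma covers_emit_premise r i : local_ok s r ch -> skip_premise r t = None ->
  i < arity r -> covers (emit_premise r t i) (ch i).
Proof.
case: r => [p||A B|A B|B|Pi A] /= Hok; rewrite ?ltn0 //.
- by case: ifP => [HN _|_]; [exact: covers_emit_ImpL|case: ifP].
- by case: ifP => // HN _; case: i => [_|//]; exact: covers_emit_ImpR.
- by move=> _; case: i => [_|//]; exact: covers_emit_Refl.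
- by case: ifP => // HN _; exact: covers_emit_Box.
Qed.

Lemma local_ok_emit r : local_ok s r ch -> skip_premise r t = None ->
  local_ok t (slim_rule r) (emit_premise r t).
Proof.
have /andP[/allP Hl /allP Hr] := t_covers.
case: r => /= [p||A B|A B|B|Pi A] Hok.
- by case: Hok => /Hl /= /orP[] // -> /Hr /= /orP[] // ->.
- by move: Hok => /Hl /= /orP[].
- case: ifP => [HN _|_]; last by case: ifP.
  by exists (rem (Imp A B) t.1); rewrite perm_to_rem // !perm_refl.
- case: ifP => // HN _.
  by exists (rem (Imp A B) t.2); rewrite perm_to_rem // !perm_refl.
- by case: Hok => /Hl /= /orP[] // -> _ _; rewrite !perm_refl.
- case: Hok => G [D [P1 _]]; case: ifP => // HN _.
  have [G' HG'] : exists G', perm_eq t.1 (G' ++ map Box (undup Pi)).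
    apply: perm_cat_uniq_subset; first by rewrite map_inj_uniq ?undup_uniq // => x y [].
    move=> F /mapP[C HC ->]; rewrite mem_undup in HC.
    have /Hl /= /orP[] // : Box C \in s.1 by rewrite (perm_mem P1) mem_cat map_f ?orbT.
  by exists G', (rem (Box A) t.2); rewrite HG' perm_to_rem // !perm_refl.
Qed.

End Replay.

Section SlimTree.
Variable P : ptree.
Hypothesis P_proof : inf_proof P.

Fixpoint skip_path (t : sequent) (v : seq nat) (k : nat) : seq nat :=
  if k is k'.+1 then
    let u := skip_path t v k' in
    if skip_premise (rl P u) t is Some i then rcons u i else u
  else v.

Definition skip_path_stops (t : sequent) (v : seq nat) (k : nat) : Prop :=
  skip_premise (rl P (skip_path t v k)) t = None.

Definition skip_end (t : sequent) (v : seq nat) : seq nat :=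
  skip_path t v (epsilon (inhabits 0) (skip_path_stops t v)).

Definition skips_from (t : sequent) (v u : seq nat) : Prop :=
  prefix v u /\ forall j, size v <= j < size u ->
    skip_premise (rl P (take j u)) t = Some (nth 0 u j).

Lemma skips_from_skip_path t v k : skips_from t v (skip_path t v k).
Proof.
elim: k => [|k [IHpre IHskip]] /=.
  by split=> [|j /andP[H1 H2]]; [exact: prefix_refl|rewrite ltnNge H1 in H2].
case E : (skip_premise _ t) => [i|] //; split.
  exact: prefix_trans IHpre (prefix_rcons _ _).
move=> j /andP[H1]; rewrite size_rcons ltnS leq_eqVlt => /orP[/eqP Hj|Hj].
  by rewrite Hj -cats1 take_size_cat // nth_cat ltnn subnn.
by rewrite -cats1 takel_cat ?(ltnW Hj) // nth_cat Hj IHskip // H1.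
Qed.

Lemma skip_path_indom t v k : indom P v -> indom P (skip_path t v k).
Proof.
move=> Hv; elim: k => [|k IH] //=.
case E : (skip_premise _ t) => [i|] //.
by rewrite indom_rcons IH (skip_premise_arity E).
Qed.

Lemma skip_path_covers t v k : indom P v -> covers t (seqt P v) ->
  covers t (seqt P (skip_path t v k)).
Proof.
move=> Hv Hc; elim: k => [|k IH] //=.
case E : (skip_premise _ t) => [i|] //.
exact: (covers_skip_premise IH (proj1 P_proof _ (skip_path_indom t k Hv)) E).
Qed.

Lemma skip_end_stops t v : indom P v -> skip_premise (rl P (skip_end t v)) t = None.
Proof.
move=> Hv; apply: (@epsilon_spec _ _ (skip_path_stops t v)); apply: NNPP => never_stops.
have step k : exists i, skip_path t v k.+1 = rcons (skip_path t v k) i.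
  rewrite /=; case E : (skip_premise _ t) => [i|]; first by exists i.
  by case: never_stops; exists k.
have size_path k : size (skip_path t v k) = size v + k.
  elim: k => [|k IH]; first by rewrite addn0.
  by have [i ->] := step k; rewrite size_rcons IH addnS.
have path_prefix k : prefix (skip_path t v k) (skip_path t v k.+1).
  by have [i ->] := step k; exact: prefix_rcons.
have path_size k : k < size (skip_path t v k.+1) by rewrite size_path addnS ltnS leq_addl.
have [m Hm /(_ m.+1)] := limit_branch_good path_prefix path_size P_proof
  (fun k => skip_path_indom t k Hv) (size v).
rewrite size_path addnS ltnS leq_addl => /(_ isT) [Hbox H1].
have [_ /(_ m)] := skips_from_skip_path t v m.+1.
rewrite size_path addnS ltnS leq_addl Hm H1 => /(_ isT) /skip_premise_box_right.
by rewrite Hbox.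
Qed.

Definition trace_step (st : seq nat * sequent) (i : nat) : seq nat * sequent :=
  let t := emit_premise (rl P st.1) st.2 i in (skip_end t (rcons st.1 i), t).

Definition trace (w : seq nat) : seq nat * sequent :=
  foldl trace_step (skip_end (seqt P [::]) [::], seqt P [::]) w.

Definition slim_tree : ptree :=
  PTree (fun w => (trace w).2) (fun w => slim_rule (rl P (trace w).1)).

Lemma trace_rcons w i : trace (rcons w i) = trace_step (trace w) i.
Proof. by rewrite /trace foldl_rcons. Qed.

Lemma trace_invariant w : indom slim_tree w ->
  [/\ indom P (trace w).1, covers (trace w).2 (seqt P (trace w).1)
    & skip_premise (rl P (trace w).1) (trace w).2 = None].
Proof.
have skip_end_inv t v : indom P v -> covers t (seqt P v) ->
    [/\ indom P (skip_end t v), covers t (seqt P (skip_end t v))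
      & skip_premise (rl P (skip_end t v)) t = None].
  by move=> Hv Hc; split; [exact: skip_path_indom|exact: skip_path_covers|exact: skip_end_stops].
elim/last_ind: w => [|w i IH]; first by move=> _; apply: skip_end_inv => //; exact: covers_refl.
rewrite indom_rcons /= arity_slim_rule => /andP[/IH [Hd Hc Hs] Hi].
rewrite trace_rcons; apply: skip_end_inv; first by rewrite indom_rcons Hd.
exact: (covers_emit_premise Hc (proj1 P_proof _ Hd) Hs Hi).
Qed.

Lemma slim_tree_local_ok w : indom slim_tree w ->
  local_ok (seqt slim_tree w) (rl slim_tree w) (fun i => seqt slim_tree (rcons w i)).
Proof.
move=> /trace_invariant [Hd Hc Hs].
have -> : (fun i => seqt slim_tree (rcons w i)) = emit_premise (rl P (trace w).1) (trace w).2.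
  by apply: functional_extensionality => i; rewrite /= trace_rcons.
exact: (local_ok_emit Hc (proj1 P_proof _ Hd) Hs).
Qed.

Lemma slim_tree_slim : slim slim_tree.
Proof. by move=> w _ Pi A /=; case: (rl P _) => //= Pi' A' [<- _]; exact: undup_uniq. Qed.

Lemma slim_tree_good_branch f : inf_branch slim_tree f -> good_branch slim_tree f.
Proof.
move=> f_branch n.
have f_dom k : indom slim_tree (bpos f k).
  by elim: k => // k IH; rewrite /bpos mkseqS indom_rcons IH f_branch.
pose U k := (trace (bpos f k)).1.
have U_step k : skips_from (trace (bpos f k.+1)).2 (rcons (U k) (f k)) (U k.+1).
  by rewrite /U /bpos mkseqS trace_rcons; exact: skips_from_skip_path.
have U_prefix k : prefix (U k) (U k.+1).
  exact: prefix_trans (prefix_rcons _ _) (proj1 (U_step k)).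
have U_lt k : size (U k) < size (U k.+1).
  by have := size_prefix (proj1 (U_step k)); rewrite size_rcons.
have U_size k : k < size (U k.+1).
  have le_size j : j <= size (U j) by elim: j => // j IH; exact: leq_ltn_trans IH (U_lt j).
  exact: leq_ltn_trans (le_size k) (U_lt k).
have U_dom k : indom P (U k) by case: (trace_invariant (f_dom k)).
have [m Hm box_right] := limit_branch_good U_prefix U_size P_proof U_dom (size (U n)).
have [k Hnk /andP[Hkm HmK]] := incr_segment U_lt Hm.
have [Hbox H1] := box_right _ HmK.
have [U_pre U_skip] := U_step k.
move: Hkm; rewrite leq_eqVlt => /orP[/eqP Em|Hlt].
- have m_lt : m < size (rcons (U k) (f k)) by rewrite size_rcons Em.
  have [Et En] := prefix_take_nth 0 U_pre m_lt.
  exists k => //; move: Hbox H1; rewrite Et En -Em -cats1 take_size_cat // nth_cat ltnn subnn.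
  by rewrite /= is_box_slim_rule.
- have := U_skip m; rewrite size_rcons Hlt HmK H1 => /(_ isT) /skip_premise_box_right.
  by rewrite Hbox.
Qed.

End SlimTree.

Theorem lemma8p4 (G D : seq form) :
  provable G D -> exists P, inf_proof P /\ slim P /\ seqt P [::] = (G, D).
Proof.
case=> P [P_proof root]; exists (slim_tree P); split; last split.
- by split; [exact: slim_tree_local_ok|exact: slim_tree_good_branch].
- exact: slim_tree_slim.
- by rewrite /= /trace /= root.
Qed.
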